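(* Let $y$ be a Lyndon word with $|y|>1$, written as $y=x^kzb$ where $x$ is a Lyndon word, $k\ge 1$, $|x|$ is the smallest period of $x^kz$, $z$ is a proper prefix of $x$ (possibly empty), $a$ is the letter such that $za$ is a prefix of $x$, and $b$ is a letter with $a<b$. Let $1\le e\le k$ and let $u,v$ be non-empty proper prefixes of $x$ such that $x^eu$ and $x^ev$ are proper prefixes of $y$. If $u\prec v$, then $x^eu\prec x^ev$.
   Context: Lexicographic order $<$ on finite and infinite words: $u<v$ if $u$ is a proper prefix of $v$, or $u=ras$, $v=rbt$ with letters $a<b$. A Lyndon word is a non-empty word strictly smaller than each of its proper non-empty suffixes. Infinite ordering: for non-empty words $u,v$, $u\prec v$ iff $u^\infty<v^\infty$, or $u^\infty=v^\infty$ and $|u|>|v|$, where $u^\infty=uuu\cdots$. A period of a word $w$ is an integer $p\ge1$ with $w[i]=w[i+p]$ whenever both are defined. *)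

From mathcomp Require Import all_boot all_order.
Set Implicit Arguments. Unset Strict Implicit. Unset Printing Implicit Defensive.
Import Order.TTheory.
Local Open Scope order_scope.

Section Words.
Variables (d : Order.disp_t) (T : orderType d).

Definition proper_prefix (u v : seq T) : bool := prefix u v && (size u < size v)%N.

Definition lex_lt (u v : seq T) : Prop :=
  proper_prefix u v \/
  exists (r s t : seq T) (a b : T), u = r ++ a :: s /\ v = r ++ b :: t /\ a < b.

Definition lyndon (w : seq T) : Prop :=
  w <> [::] /\ forall i, (0 < i < size w)%N -> lex_lt w (drop i w).

Definition is_period (p : nat) (w : seq T) : Prop :=
  (1 <= p)%N /\ forall i, (i + p < size w)%N -> onth w i = onth w (i + p).

Definition smallest_period (p : nat) (w : seq T) : Prop :=
  is_period p w /\ forall q, is_period q w -> (p <= q)%N.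

Definition wpow (u : seq T) (k : nat) : seq T := flatten (nseq k u).

(* infinite words as nat -> option T; u^oo for non-empty u has only Some values *)
Definition powinf (u : seq T) : nat -> option T := fun i => onth u (i %% size u).

Definition inf_lt (f g : nat -> option T) : Prop :=
  exists n, (forall i, (i < n)%N -> f i = g i) /\
    exists a b, f n = Some a /\ g n = Some b /\ a < b.

Definition inf_eq (f g : nat -> option T) : Prop := forall i, f i = g i.

Definition prec (u v : seq T) : Prop :=
  inf_lt (powinf u) (powinf v) \/
  (inf_eq (powinf u) (powinf v) /\ (size v < size u)%N).

End Words.

From mathcomp Require Import all_boot all_order zify.
Import Order.TTheory.
Set Implicit Arguments. Unset Strict Implicit. Unset Printing Implicit Defensive.
Local Open Scope order_scope.

(* For non-empty words the infinite order is decided by the two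
   conjugate products: u ≺ v holds as soon as uv < vu, and conversely u ≺ v
   forces either uv < vu, or uv = vu with |u| > |v|.  Hence, writing
   X = x^e (which begins with x since e >= 1), the claim x^e u ≺ x^e v reduces
   to the finite comparison u X v < v X u.
   - If uv < vu, both u and v are prefixes of X, so u X v begins with uv and
     v X u begins with vu, and the first mismatch of uv, vu decides.
   - If uv = vu with |v| < |u|, then u = vt with tv = vt, so x = t(vr) for
     some r; as x is Lyndon, x < vr with a genuine mismatch, which decides
     u X v = vt·x··· against v X u = vt·vr···. *)

Section Lexicographic.
Variables (d : Order.disp_t) (T : orderType d).
Implicit Types (p q w s : seq T).

Lemma lex_lt_cat2l w p q : lex_lt p q -> lex_lt (w ++ p) (w ++ q).
Proof.
case=> [/andP[pre_pq lt_pq] | [r [s1 [t1 [a [b [-> [-> lt_ab]]]]]]]].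
  by left; rewrite /proper_prefix prefix_catr // eqxx pre_pq !size_cat ltn_add2l.
by right; exists (w ++ r), s1, t1, a, b; rewrite !catA.
Qed.

(* If p < q and p is not shorter than q, then p < q is witnessed by a
   mismatch, so arbitrary right extensions keep the comparison. *)
Lemma lex_lt_catr p q : lex_lt p q -> (size q <= size p)%N ->
  forall p' q', lex_lt (p ++ p') (q ++ q').
Proof.
case=> [/andP[_ lt_pq] /(leq_trans lt_pq) | [r [s1 [t1 [a [b [-> [-> lt_ab]]]]]]] _].
  by rewrite ltnn.
by move=> p' q'; right; exists r, (s1 ++ p'), (t1 ++ q'), a, b; rewrite -!catA.
Qed.

Lemma lex_lt_trichotomy s s' : size s = size s' ->
  [\/ lex_lt s s', s = s' | lex_lt s' s].
Proof.
elim: s s' => [|x s IHs] [|y s'] //=; first by constructor 2.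
move=> [/IHs IH].
have [lt_xy | lt_yx | <-] := ltgtP x y.
- by constructor 1; right; exists [::], s, s', x, y.
- by constructor 3; right; exists [::], s', s, y, x.
case: IH => [lt_ss' | -> | lt_s's].
- by constructor 1; apply: (lex_lt_cat2l [:: x]).
- by constructor 2.
- by constructor 3; apply: (lex_lt_cat2l [:: x]).
Qed.

End Lexicographic.

Section InfinitePowers.
Variables (d : Order.disp_t) (T : orderType d).
Implicit Types (u v : seq T) (f g : nat -> option T).

Lemma inf_lt_asym f g : inf_lt f g -> ~ inf_lt g f.
Proof.
move=> [m [agree_m [a [b [fm [gm lt_ab]]]]]] [n [agree_n [a' [b' [gn [fn lt_ab']]]]]].
have [lt_mn | lt_nm | eq_mn] := ltngtP m n.
- by move: (agree_n m lt_mn); rewrite fm gm => -[eq_ba]; move: lt_ab; rewrite eq_ba ltxx.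
- by move: (agree_m n lt_nm); rewrite fn gn => -[eq_ba']; move: lt_ab'; rewrite eq_ba' ltxx.
- move: gn fn; rewrite -eq_mn fm gm => -[eq_ba'] [eq_ab']; subst a' b'.
  by move: (lt_trans lt_ab lt_ab'); rewrite ltxx.
Qed.

Lemma inf_lt_neq f g : inf_lt f g -> ~ inf_eq f g.
Proof.
move=> [n [_ [a [b [fn [gn lt_ab]]]]]] /(_ n).
by rewrite fn gn => -[eq_ab]; move: lt_ab; rewrite eq_ab ltxx.
Qed.

Lemma powinf_small u n : (n < size u)%N -> powinf u n = onth u n.
Proof. by move=> lt_nu; rewrite /powinf modn_small. Qed.

Lemma powinf_shift u n : powinf u (n + size u) = powinf u n.
Proof. by rewrite /powinf modnDr. Qed.

Lemma powinf_agree u v D : (0 < size u)%N -> (D < size u + size v)%N ->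
  (forall i, (i < D)%N -> onth (u ++ v) i = onth (v ++ u) i) ->
  forall n, (n <= D)%N -> powinf u n = onth (u ++ v) n.
Proof.
move=> u_gt0 lt_D agree; elim/ltn_ind=> n IHn le_nD.
have [lt_nu | le_un] := ltnP n (size u).
  by rewrite powinf_small // onth_cat lt_nu.
have -> : n = (n - size u) + size u by rewrite subnK.
rewrite powinf_shift IHn; try lia.
rewrite agree; last by lia.
have lt_nv : (n - size u < size v)%N by lia.
by rewrite !onth_cat lt_nv ltnNge leq_addl addnK.
Qed.

(* uv < vu implies u^∞ < v^∞: the first mismatch of uv, vu is one of the
   infinite words. *)
Lemma lex_lt_powinf u v : (0 < size u)%N -> (0 < size v)%N ->
  lex_lt (u ++ v) (v ++ u) -> inf_lt (powinf u) (powinf v).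
Proof.
move=> u_gt0 v_gt0; have size_uv : size (v ++ u) = size (u ++ v).
  by rewrite !size_cat addnC.
case=> [/andP[_] | [r [s [t [a [b [uvE [vuE lt_ab]]]]]]]].
  by rewrite size_uv ltnn.
have agree i : (i < size r)%N -> onth (u ++ v) i = onth (v ++ u) i.
  by move=> lt_ir; rewrite uvE vuE !onth_cat lt_ir.
have lt_r_uv : (size r < size u + size v)%N.
  by rewrite -size_cat uvE size_cat /= addnS ltnS leq_addr.
have lt_r_vu : (size r < size v + size u)%N by rewrite addnC.
have Eu := powinf_agree u_gt0 lt_r_uv agree.
have Ev := powinf_agree v_gt0 lt_r_vu (fun i lt_ir => esym (agree i lt_ir)).
exists (size r); split.
  by move=> i lt_ir; rewrite Eu ?Ev ?agree // ltnW.
by exists a, b; rewrite Eu // Ev // uvE vuE !onth_cat ltnn subnn.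
Qed.

Lemma commute_powinf u v : (0 < size u)%N -> (0 < size v)%N ->
  u ++ v = v ++ u -> inf_eq (powinf u) (powinf v).
Proof.
move=> u_gt0 v_gt0 uv_comm.
have agree i : (i < (size u + size v).-1)%N -> onth (u ++ v) i = onth (v ++ u) i.
  by rewrite uv_comm.
have lt_uv : ((size u + size v).-1 < size u + size v)%N by lia.
have lt_vu : ((size u + size v).-1 < size v + size u)%N by lia.
have Eu := powinf_agree u_gt0 lt_uv agree.
have Ev := powinf_agree v_gt0 lt_vu (fun i lt_i => esym (agree i lt_i)).
elim/ltn_ind=> n IHn.
have [lt_n | le_n] := ltnP n (size u + size v).
  by rewrite Eu ?Ev ?uv_comm //; lia.
(* beyond |uv|, shift alternately by the periods |u| and |v| *)
have -> : n = (n - size u - size v) + size v + size u by lia.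
set m := n - size u - size v.
rewrite powinf_shift IHn; last by lia.
rewrite powinf_shift -IHn; last by lia.
rewrite -powinf_shift IHn; last by lia.
by rewrite addnAC powinf_shift.
Qed.

End InfinitePowers.

Section Conjugates.
Variables (d : Order.disp_t) (T : orderType d).
Implicit Types (u v w x p q : seq T).

Lemma prec_cases u v : (0 < size u)%N -> (0 < size v)%N -> prec u v ->
  lex_lt (u ++ v) (v ++ u) \/ (u ++ v = v ++ u /\ (size v < size u)%N).
Proof.
move=> u_gt0 v_gt0 prec_uv.
have size_uv : size (u ++ v) = size (v ++ u) by rewrite !size_cat addnC.
case: (lex_lt_trichotomy size_uv) => [lt_uv | uv_comm | lt_vu]; first by left.
- right; split=> //; case: prec_uv => [lt_pow | [] //].
  by case: (inf_lt_neq lt_pow (commute_powinf u_gt0 v_gt0 uv_comm)).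
- have lt_pow := lex_lt_powinf v_gt0 u_gt0 lt_vu.
  case: prec_uv => [lt_pow' | [eq_pow _]]; first by case: (inf_lt_asym lt_pow lt_pow').
  by case: (inf_lt_neq lt_pow) => i; rewrite eq_pow.
Qed.

Lemma lex_lt_conj_prefix u v w : prefix u w -> prefix v w ->
  lex_lt (u ++ v) (v ++ u) -> forall p q, lex_lt (u ++ w ++ p) (v ++ w ++ q).
Proof.
move=> /prefixP[wu wE] /prefixP[wv wE'] lt_uv p q.
have -> : u ++ w ++ p = (u ++ v) ++ (wv ++ p) by rewrite {1}wE' -!catA.
have -> : v ++ w ++ q = (v ++ u) ++ (wu ++ q) by rewrite {1}wE -!catA.
by apply: lex_lt_catr; rewrite // !size_cat addnC.
Qed.

(* A Lyndon word is smaller than each proper suffix s, by a genuine mismatch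
   since s is shorter: this survives arbitrary right extensions. *)
Lemma lyndon_lt_suffix_cat x t s : lyndon x -> x = t ++ s ->
  (0 < size t)%N -> (0 < size s)%N -> forall p q, lex_lt (x ++ p) (s ++ q).
Proof.
move=> [_ lt_suffix] xE t_gt0 s_gt0; apply: lex_lt_catr; last first.
  by rewrite xE size_cat leq_addl.
have := lt_suffix (size t); rewrite xE drop_size_cat //; apply.
by rewrite size_cat t_gt0 -{1}[size t]addn0 ltn_add2l.
Qed.

(* Second case: u = vt with t, v commuting, u a prefix of the Lyndon word x,
   and x a prefix of w.  Then x = t(vr) and the Lyndon property decides. *)
Lemma lex_lt_conj_commuting x v t w : lyndon x -> prefix x w ->
  prefix (v ++ t) x -> t ++ v = v ++ t -> (0 < size t)%N -> (0 < size v)%N ->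
  forall p q, lex_lt ((v ++ t) ++ w ++ p) (v ++ w ++ q).
Proof.
move=> lyn_x /prefixP[w' ->] /prefixP[r xE] tv_comm t_gt0 v_gt0 p q.
have xE' : x = t ++ (v ++ r) by rewrite xE -tv_comm -catA.
have -> : v ++ (x ++ w') ++ q = (v ++ t) ++ (v ++ r) ++ w' ++ q.
  by rewrite {1}xE' -!catA.
apply: lex_lt_cat2l; rewrite -[(x ++ w') ++ p]catA.
by apply: (lyndon_lt_suffix_cat lyn_x xE'); rewrite // size_cat ltn_addr.
Qed.

Lemma prec_prefixes_conj x u v w : lyndon x ->
  prefix u x -> prefix v x -> (0 < size u)%N -> (0 < size v)%N ->
  prec u v -> prefix x w -> forall p q, lex_lt (u ++ w ++ p) (v ++ w ++ q).
Proof.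
move=> lyn_x pre_ux pre_vx u_gt0 v_gt0 prec_uv pre_xw.
case: (prec_cases u_gt0 v_gt0 prec_uv) => [lt_uv | [uv_comm lt_vu]].
  by apply: lex_lt_conj_prefix; rewrite // (prefix_trans _ pre_xw).
have vE : v = take (size v) u.
  by rewrite -{1}(take_size_cat u (erefl (size v))) -uv_comm take_cat lt_vu.
have uE : u = v ++ drop (size v) u by rewrite {1}vE cat_take_drop.
set t := drop (size v) u in uE *.
have tv_comm : t ++ v = v ++ t.
  by have := congr1 (drop (size v)) uv_comm; rewrite uE -catA !drop_size_cat.
move=> p q; rewrite uE; apply: (lex_lt_conj_commuting lyn_x) => //.
  by rewrite -uE.
by move: lt_vu; rewrite uE size_cat -{1}[size v]addn0 ltn_add2l.
Qed.

End Conjugates.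

Theorem mainTheorem4 (d : Order.disp_t) (T : orderType d)
  (y x z : seq T) (k e : nat) (a b : T) (u v : seq T) :
  lyndon y -> (1 < size y)%N ->
  lyndon x -> (1 <= k)%N ->
  y = wpow x k ++ z ++ [:: b] ->
  smallest_period (size x) (wpow x k ++ z) ->
  proper_prefix z x ->
  prefix (rcons z a) x ->
  a < b ->
  (1 <= e <= k)%N ->
  u <> [::] -> proper_prefix u x ->
  v <> [::] -> proper_prefix v x ->
  proper_prefix (wpow x e ++ u) y ->
  proper_prefix (wpow x e ++ v) y ->
  prec u v -> prec (wpow x e ++ u) (wpow x e ++ v).
Proof.
move=> _ _ lyn_x _ _ _ _ _ _ /andP[e_gt0 _] /eqP u_n0 /andP[pre_ux _]
  /eqP v_n0 /andP[pre_vx _] _ _ prec_uv.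
have [u_gt0 v_gt0] : (0 < size u)%N /\ (0 < size v)%N by rewrite !lt0n !size_eq0.
have pre_x_pow : prefix x (wpow x e) by case: e e_gt0 => // e' _; apply: prefix_prefix.
left; apply: lex_lt_powinf; rewrite ?size_cat ?addn_gt0 ?u_gt0 ?v_gt0 ?orbT //.
rewrite -!catA; apply: lex_lt_cat2l.
exact: prec_prefixes_conj lyn_x pre_ux pre_vx u_gt0 v_gt0 prec_uv pre_x_pow _ _.
Qed.
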